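(* Suppose $B:\mathcal{F}\otimes\mathcal{F}\to\mathbb{Z}$ is a bilinear form such that: (1) if $w_0\in\mathcal{M}_{n_0}^{e_0}$, $w_1\in\mathcal{M}_{n_1}^{e_1}$ with $(n_0,e_0)\ne(n_1,e_1)$ then $B(w_0,w_1)=0$; (2) for all words $w_0,w_1$: $B(a_{x,i}w_0,w_1)=B(w_0,a^*_{x,i}w_1)$ for $0\le i\le n_x(w_0)$, and $B(w_0,a_{y,i}w_1)=B(a^*_{y,i}w_0,w_1)$ for $0\le i\le n_y(w_1)$ (with $B(0,\cdot)=B(\cdot,0)=0$ when a terminal annihilation gives $0$); (3) $B(1,1)=1$. Then $B=\langle\cdot|\cdot\rangle$.
   Context: $\mathcal{M}$ is the free monoid of words in $x,y$ (empty word $1$), $\mathcal{F}$ its $\mathbb{Z}$-span; $\mathcal{M}_n^e$ is the set of words with $n_x$ $x$'s and $n_y$ $y$'s where $n=n_x+n_y$, $e=n_y-n_x$; $n_s(w)$ is the number of letters $s$ in $w$. Operators on a word $w$ (extended linearly): $a_{s,0}w$ deletes the initial letter if it is $s$, else $0$; $a_{s,i}w$ ($1\le i\le n_s(w)$) deletes the $i$-th $s$; $a_{s,n_s+1}w$ deletes the final letter if it is $s$, else $0$; $a^*_{s,0}w$ prepends $s$; $a^*_{s,i}w$ ($1\le i\le n_s(w)$) replaces the $i$-th $s$ by $ss$; $a^*_{s,n_s+1}w$ appends $s$. $\langle w_0|w_1\rangle=1$ if $w_0,w_1$ have the same degrees and for each $i$ the $i$-th $x$ of $w_0$ is at a position $\le$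 that of the $i$-th $x$ of $w_1$; otherwise $0$; extended bilinearly. *)

From mathcomp Require Import all_boot all_order all_algebra.
Set Implicit Arguments. Unset Strict Implicit. Unset Printing Implicit Defensive.
Import Order.TTheory GRing.Theory Num.Theory.
Local Open Scope ring_scope.

Definition letter := bool.
Definition lx : letter := false.
Definition ly : letter := true.

Definition word := seq letter.

Definition nlet (s : letter) (w : word) : nat := count_mem s w.

Definition deg (w : word) : nat * int :=
  (size w, (nlet ly w)%:Z - (nlet lx w)%:Z).

(* delete the i-th (1-based) occurrence of s *)
Fixpoint del_occ (s : letter) (i : nat) (w : word) : word :=
  match w with
  | [::] => [::]
  | c :: t => if c == s then (if i == 1%N then t else c :: del_occ s i.-1 t)
              else c :: del_occ s i t
  end.

(* replace the i-th (1-based) occurrence of s by ss *)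
Fixpoint dup_occ (s : letter) (i : nat) (w : word) : word :=
  match w with
  | [::] => [::]
  | c :: t => if c == s then (if i == 1%N then s :: s :: t else c :: dup_occ s i.-1 t)
              else c :: dup_occ s i t
  end.

(* annihilation operator a_{s,i}; None represents the element 0 of F *)
Definition ann (s : letter) (i : nat) (w : word) : option word :=
  if i == 0%N then
    (match w with c :: t => if c == s then Some t else None | [::] => None end)
  else if (i <= nlet s w)%N then Some (del_occ s i w)
  else if i == (nlet s w).+1 then
    (match w with
     | [::] => None
     | c :: t => if last c t == s then Some (belast c t) else None end)
  else None.

(* creation operator a*_{s,i}, meaningful for 0 <= i <= n_s(w)+1 *)
Definition cre (s : letter) (i : nat) (w : word) : word :=
  if i == 0%N then s :: w
  else if (i <= nlet s w)%N then dup_occ s i w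
  else rcons w s.

Definition positions (s : letter) (w : word) : seq nat :=
  [seq k <- iota 0 (size w) | nth lx w k == s].

Definition pairing (w0 w1 : word) : int :=
  if [&& deg w0 == deg w1 & all2 (fun p q => p <= q)%N (positions lx w0) (positions lx w1)]
  then 1 else 0.

Definition evl (B : word -> word -> int) (o : option word) (w1 : word) : int :=
  if o is Some w then B w w1 else 0.
Definition evr (B : word -> word -> int) (w0 : word) (o : option word) : int :=
  if o is Some w then B w0 w else 0.

From mathcomp Require Import all_boot all_order all_algebra zify.
Set Implicit Arguments. Unset Strict Implicit. Unset Printing Implicit Defensive.

(* Induction on the total length of (w0, w1).  If w1 lies in the image of a creation operator
   a*_{x,i} (it starts or ends with x, or contains xx), adjointness rewrites B(w0, w1) as B at a
   shorter pair, and <.|.> obeys the same recursion; symmetrically when w0 starts or ends with y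
   or contains yy, using that <w0|w1> also says that the y's of w1 are dominated by those of w0.
   Otherwise w0 = x..., w1 = y..., every x of w1 is followed by a y and every y of w0 by an x,
   so n_y(w0) < n_x(w0) = n_x(w1) < n_y(w1) = n_y(w0) once the degrees agree: only the pair of
   empty words is left, where B(1,1) = 1. *)

Lemma nlet_cat s u w : nlet s (u ++ w) = nlet s u + nlet s w.
Proof. exact: count_cat. Qed.

Lemma nlet_cons s c w : nlet s (c :: w) = (c == s) + nlet s w.
Proof. by rewrite /nlet /= eq_sym. Qed.

Lemma nlet_compl s w : nlet s w + nlet (~~ s) w = size w.
Proof.
by rewrite /nlet -(count_predC (pred1 s)); congr (_ + _); apply: eq_count; case; case: s.
Qed.

Lemma eq_nlet_compl s a b : size a = size b -> nlet s a = nlet s b ->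
  nlet (~~ s) a = nlet (~~ s) b.
Proof. by have := nlet_compl s a; have := nlet_compl s b; lia. Qed.

Lemma positions_cat s u w :
  positions s (u ++ w) = positions s u ++ map (addn (size u)) (positions s w).
Proof.
rewrite /positions size_cat iotaD filter_cat add0n; congr (_ ++ _).
  apply: eq_in_filter => k; rewrite mem_iota add0n => /andP[_ ltku].
  by rewrite nth_cat ltku.
rewrite -[size u]addn0 iotaDl addn0 filter_map; congr (map _ _).
by apply: eq_filter => k /=; rewrite nth_cat ltnNge leq_addr addKn.
Qed.

Lemma positions_cons s c w : positions s (c :: w) =
  (if c == s then [:: 0] else [::]) ++ map (addn 1) (positions s w).
Proof. by rewrite -cat1s positions_cat /positions /=; case: (c == s). Qed.

Lemma size_positions s w : size (positions s w) = nlet s w.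
Proof.
elim: w => // c w IH.
by rewrite positions_cons size_cat size_map IH nlet_cons; case: (c == s).
Qed.

Lemma sorted_positions s w : sorted ltn (positions s w).
Proof. exact/sorted_filter/iota_ltn_sorted/ltn_trans. Qed.

Lemma nlet_take s k w : nlet s (take k w) = count (fun p => p < k) (positions s w).
Proof.
elim: w k => [|c w IH] [|k] //; rewrite positions_cons count_cat count_map.
  by rewrite take0 (@eq_count _ _ pred0) ?count_pred0; case: (c == s).
by rewrite [take _ _]/= nlet_cons IH; case: (c == s).
Qed.

Lemma all2_cat T (r : rel T) p1 p2 q1 q2 : size p1 = size q1 ->
  all2 r (p1 ++ p2) (q1 ++ q2) = all2 r p1 q1 && all2 r p2 q2.
Proof. by elim: p1 q1 => [|x p IH] [|y q] //= [/IH->]; rewrite andbA. Qed.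

Lemma all2_map T (r : rel T) (f g : T -> T) p q :
  all2 r (map f p) (map g q) = all2 (fun x y => r (f x) (g y)) p q.
Proof. by elim: p q => [|x p IH] [|y q] //=; rewrite IH. Qed.

Lemma all2_leq_countP (P Q : seq nat) : sorted ltn P -> sorted ltn Q -> size P = size Q ->
  reflect (forall k, count (fun q => q < k) Q <= count (fun p => p < k) P) (all2 leq P Q).
Proof.
elim: P Q => [|p P IH] [|q Q] //= sP sQ; [by constructor | case=> sPQ].
have minP := order_path_min ltn_trans sP; have minQ := order_path_min ltn_trans sQ.
have count_above k R : all (leq k) R -> count (fun x => x < k) R = 0.
  move=> /allP geR; rewrite (eq_in_count (a2 := pred0)) ?count_pred0 // => x /geR.
  by rewrite /= ltnNge => ->.
have {}IH := IH Q (path_sorted sP) (path_sorted sQ) sPQ; apply: (iffP idP).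
  move=> /andP[le_pq /IH le_count] k; have := le_count k.
  by case: (ltnP q k); case: (ltnP p k); lia.
move=> le_count; have le_pq : p <= q.
  rewrite leqNgt; apply/negP => lt_qp; have := le_count q.+1.
  by rewrite (count_above q.+1 P) //=; [lia | apply: sub_all minP => x /=; lia].
rewrite le_pq; apply/IH => k; have := le_count k; case: (ltnP q k) => [|le_kq]; first lia.
by rewrite (count_above k Q) //; apply: sub_all minQ => x /=; lia.
Qed.

Definition pairingb (s : letter) (a b : word) : bool :=
  [&& size a == size b, nlet s a == nlet s b & all2 leq (positions s a) (positions s b)].

(* Both sides say that, for every k, the first k letters of b contain at most as many s as the
   first k letters of a. *)
Lemma pairingb_compl s a b : pairingb s a b = pairingb (~~ s) b a.
Proof.
rewrite /pairingb eq_sym; case: eqP => //= sab.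
have compl_a := nlet_compl s a; have compl_b := nlet_compl s b.
have -> : (nlet (~~ s) b == nlet (~~ s) a) = (nlet s a == nlet s b) by apply/eqP/eqP; lia.
case: eqP => //= nab.
have compl_take k : nlet s (take k a) + nlet (~~ s) (take k a) =
                    nlet s (take k b) + nlet (~~ s) (take k b).
  by rewrite !nlet_compl !size_take sab.
have countP t u v := all2_leq_countP (sorted_positions t u) (sorted_positions t v).
apply/countP/countP; rewrite ?size_positions; try lia;
  by move=> le_count k; have := le_count k; rewrite -!nlet_take; have := compl_take k; lia.
Qed.

Lemma deg_eqE a b : (deg a == deg b) = (size a == size b) && (nlet lx a == nlet lx b).
Proof.
rewrite /deg xpair_eqE; case: eqP => //= sab.
have compl_a : nlet lx a + nlet ly a = size a := nlet_compl lx a.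
have compl_b : nlet lx b + nlet ly b = size b := nlet_compl lx b.
by apply/eqP/eqP; lia.
Qed.

Lemma pairingE a b : pairing a b = (pairingb lx a b)%:R%R.
Proof. by rewrite /pairing /pairingb deg_eqE -andbA; case: ifP. Qed.

Lemma pairingb_deg a b : deg a != deg b -> pairingb lx a b = false.
Proof. by rewrite deg_eqE /pairingb; do 2!case: (_ == _). Qed.

Lemma del_occ_cat s u r : del_occ s (nlet s u).+1 (u ++ s :: r) = u ++ r.
Proof.
elim: u => [|c u IH]; first by rewrite /= eqxx.
by rewrite nlet_cons /=; case: eqP => [->|_]; rewrite ?add1n ?IH.
Qed.

Lemma dup_occ_cat s u r : dup_occ s (nlet s u).+1 (u ++ s :: r) = u ++ [:: s, s & r].
Proof.
elim: u => [|c u IH]; first by rewrite /= eqxx.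
by rewrite nlet_cons /=; case: eqP => [->|_]; rewrite ?add1n ?IH.
Qed.

Lemma occ_split s i w : i < nlet s w -> exists u r, w = u ++ s :: r /\ nlet s u = i.
Proof.
elim: w i => [|c w IH] i //; rewrite nlet_cons; case: eqP => [->|ncs] /= lt_iw.
  case: i lt_iw => [|i lt_iw]; first by exists [::], w.
  have [u [r [-> nu]]] := IH i lt_iw.
  by exists (s :: u), r; rewrite nlet_cons eqxx nu.
have [u [r [-> nu]]] := IH i lt_iw.
by exists (c :: u), r; rewrite nlet_cons nu (introF eqP ncs).
Qed.

Lemma ann_del s i w : 0 < i <= nlet s w -> ann s i w = Some (del_occ s i w).
Proof. by rewrite /ann; case: i => //= i ->. Qed.

Lemma cre_dup s i w : 0 < i <= nlet s w -> cre s i w = dup_occ s i w.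
Proof. by rewrite /cre; case: i => //= i ->. Qed.

Lemma cre_last s w : cre s (nlet s w).+1 w = rcons w s.
Proof. by rewrite /cre /= ltnn. Qed.

Lemma eq_all2 T (r1 r2 : rel T) : r1 =2 r2 -> all2 r1 =2 all2 r2.
Proof. by move=> eq_r p q; elim: p q => [|x p IH] [|y q] //=; rewrite eq_r IH. Qed.

Lemma pairingb_cons s c a b : pairingb s (c :: a) (s :: b) = (c == s) && pairingb s a b.
Proof.
rewrite /pairingb !nlet_cons !positions_cons eqxx /= eqSS.
case: (c == s) => /=; last by case: (positions s a) => [|p P]; rewrite /= ?add1n ?andbF.
by rewrite !add1n eqSS all2_map (@eq_all2 _ _ leq) // => p q /=; rewrite leq_add2l.
Qed.

(* The hypothesis on W makes the comparison of the two cancelled letters redundant. *)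
Lemma pairingb_cancel s U R V W : nlet s U = nlet s V -> head s W == s ->
  pairingb s (U ++ s :: R) (V ++ s :: W) = pairingb s (U ++ R) (V ++ W).
Proof.
move=> nUV headW; rewrite /pairingb !size_cat !nlet_cat !nlet_cons eqxx /=.
rewrite !positions_cat !positions_cons eqxx /= !all2_cat ?size_positions //.
rewrite !addnS eqSS nUV eqn_add2l eqSS eqn_add2l !addn0 -!map_comp !all2_map.
case: eqP => //= sizes; case: eqP => //= _.
case: (all2 leq (positions s U) _) => //=; rewrite all2_map.
rewrite (@eq_all2 _ _ (fun x y => size U + x <= size V + y)); last first.
  by move=> x y /=; rewrite !(addnCA _ 1) leq_add2l.
apply: andb_idl.
case: W headW sizes => [_ /= sizes _|w W' /= /eqP -> _]; first lia.
by rewrite positions_cons eqxx; case: (positions s R) => //= p P /andP[le_pq _]; lia.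
Qed.

(* w is in the image of some creation operator a*_{s,i}. *)
Definition reducible (s : letter) (w : word) : bool :=
  [|| head (~~ s) w == s, infix [:: s; s] w | last (~~ s) w == s].

(* Every s but a final one is followed by a non-s letter, and that letter is not the first one. *)
Lemma nlet_no_double s w : ~~ infix [:: s; s] w ->
  nlet s w + (head s w != s) <= nlet (~~ s) w + (last (~~ s) w == s).
Proof.
elim: w => [|c w IH]; first by case: s.
rewrite infix_consl negb_or => /andP[not_ss /IH {}IH].
rewrite !nlet_cons /=; case: w not_ss IH => [|d w]; first by case: c; case: s.
rewrite /= prefix0s andbT.
move: (nlet s w) (nlet (~~ s) w) (last d w == s : nat) => m n l.
by case: c; case: d; case: s => /=; lia.
Qed.

Lemma nlet_lt_irreducible s c w :
  ~~ reducible s (c :: w) -> nlet s (c :: w) < nlet (~~ s) (c :: w).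
Proof.
case/norP => c_ns /norP[no_ss last_ns]; rewrite /= in c_ns last_ns.
have := nlet_no_double no_ss.
by rewrite [head _ _]/= [last _ _]/= c_ns (negbTE last_ns); lia.
Qed.

Lemma reducible_or_nil s a b : size a = size b -> nlet s a = nlet s b -> b != [::] ->
  reducible s b || reducible (~~ s) a.
Proof.
case: b => // d b; case: a => // c a sizes nls _.
apply/norP => -[/nlet_lt_irreducible lt_b /nlet_lt_irreducible]; rewrite negbK => lt_a.
by have := nlet_compl s (c :: a); have := nlet_compl s (d :: b); lia.
Qed.

Lemma cre_cut s V W : head s W == s -> cre s (nlet s V).+1 (V ++ W) = V ++ s :: W.
Proof.
case: W => [_|d W /= /eqP ->]; first by rewrite !cats0 cre_last cats1.
by rewrite cre_dup ?dup_occ_cat // nlet_cat nlet_cons eqxx; lia.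
Qed.

Lemma reducible_cut s b : infix [:: s; s] b || (last (~~ s) b == s) ->
  exists V W, b = V ++ s :: W /\ head s W == s.
Proof.
case/orP => [/infixP[V [W ->]]|]; first by exists V, (s :: W).
case/lastP: b => [|V d]; first by case: s.
by rewrite last_rcons => /eqP ->; exists V, [::]; rewrite cats1.
Qed.

Definition agrees_below (C : word -> word -> int) (s : letter) (n : nat) : Prop :=
  forall a b, size a + size b < n -> C a b = (pairingb s a b)%:R%R.

Section Reduction.

Variables (C : word -> word -> int) (s : letter).
Hypothesis C_adjoint : forall a b i, i <= nlet s a -> i <= (nlet s b).+1 ->
  evl C (ann s i a) b = C a (cre s i b).

Lemma pairing_of_cons a b : agrees_below C s (size a + size (s :: b)) ->
  C a (s :: b) = (pairingb s a (s :: b))%:R%R.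
Proof.
move=> IH; rewrite -[s :: b]/(cre s 0 b) -C_adjoint //.
case: a IH => [//|c a] IH; rewrite /ann /= pairingb_cons; case: eqP => //= _.
by apply: IH; rewrite /=; lia.
Qed.

Lemma pairing_of_cut a V W : head s W == s -> nlet s a = nlet s (V ++ s :: W) ->
  agrees_below C s (size a + size (V ++ s :: W)) ->
  C a (V ++ s :: W) = (pairingb s a (V ++ s :: W))%:R%R.
Proof.
move=> head_W nla IH.
have [U [R [def_a nUV]]] : exists U R, a = U ++ s :: R /\ nlet s U = nlet s V.
  by apply: occ_split; rewrite nla nlet_cat nlet_cons eqxx; lia.
rewrite -{1}cre_cut // -C_adjoint; last 2 first.
- by rewrite nla nlet_cat nlet_cons eqxx; lia.
- by rewrite nlet_cat; lia.
rewrite ann_del; last by rewrite nla nlet_cat nlet_cons eqxx; lia.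
rewrite def_a -nUV del_occ_cat pairingb_cancel // /= IH // def_a !size_cat /=; lia.
Qed.

Lemma pairing_of_reducible a b : reducible s b -> nlet s a = nlet s b ->
  agrees_below C s (size a + size b) -> C a b = (pairingb s a b)%:R%R.
Proof.
case/orP => [|/reducible_cut[V [W [-> head_W]]]]; last exact: pairing_of_cut.
case: b => [|d b] /eqP; first by case: s.
by move=> /= -> _; apply: pairing_of_cons.
Qed.

End Reduction.

Local Open Scope ring_scope.

Theorem mainTheorem7 (B : word -> word -> int) :
  (forall w0 w1 : word, deg w0 != deg w1 -> B w0 w1 = 0) ->
  (forall (w0 w1 : word) (i : nat), (i <= nlet lx w0)%N -> (i <= (nlet lx w1).+1)%N ->
     evl B (ann lx i w0) w1 = B w0 (cre lx i w1)) ->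
  (forall (w0 w1 : word) (i : nat), (i <= nlet ly w1)%N -> (i <= (nlet ly w0).+1)%N ->
     evr B w0 (ann ly i w1) = B (cre ly i w0) w1) ->
  B [::] [::] = 1 ->
  forall w0 w1 : word, B w0 w1 = pairing w0 w1.
Proof.
move=> B_deg B_x B_y B_nil.
have B_y' : forall a b i, (i <= nlet ly a)%N -> (i <= (nlet ly b).+1)%N ->
    evl (fun a b => B b a) (ann ly i a) b = B (cre ly i b) a.
  by move=> a b i *; rewrite -B_y //; case: ann.
suff agree n : agrees_below B lx n.
  by move=> w0 w1; rewrite pairingE (agree (size w0 + size w1).+1).
elim: n => // n IH a b lt_ab.
have {}IH : agrees_below B lx (size a + size b).
  by move=> a' b' lt_ab'; apply: IH; apply: leq_trans lt_ab' _.
have [deg_ab|ndeg] := eqVneq (deg a) (deg b); last by rewrite B_deg // pairingb_deg.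
move/eqP: deg_ab; rewrite deg_eqE => /andP[/eqP sizes /eqP nls].
have [b_nil|b_cons] := eqVneq b [::].
  by move: sizes; rewrite b_nil => /size0nil ->.
case/orP: (reducible_or_nil sizes nls b_cons) => [red_b|red_a].
  exact: pairing_of_reducible.
rewrite pairingb_compl; apply: (pairing_of_reducible B_y') => //.
  exact/esym/(@eq_nlet_compl lx).
by move=> a' b' lt_ab'; rewrite (pairingb_compl ly); apply: IH; lia.
Qed.
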